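(* Let $\mathbb T$ be the unit circle and $f:\mathbb T\to\mathbb C$ a function in $\mathscr W^{1,2}(\mathbb T)$ with Fourier expansion $f(e^{i\theta})=\sum_{n\in\mathbb Z}c_ne^{in\theta}$. If $$\max_{\mathbb T}|f-c_0|\ge2\min_{\mathbb T}|f-c_0|,$$ then $$\sum_{n\in\mathbb Z}n|c_n|^2\le\frac{99}{100}\sum_{n\in\mathbb Z}n^2|c_n|^2 .$$ *)

From Stdlib Require Export Reals ZArith.
Open Scope R_scope.

(* Symmetric partial sum  sum_{n=-N}^{N} g n  of a Z-indexed real sequence. *)
Definition zsum (g : Z -> R) (N : nat) : R :=
  sum_f_R0 (fun k => g (Z.of_nat k - Z.of_nat N)%Z) (2 * N).

Definition ZSeries (g : Z -> R) (l : R) : Prop :=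
  Un_cv (fun N => zsum g N) l.

Definition cmod (x y : R) : R := sqrt (x ^ 2 + y ^ 2).

Definition IsMax (h : R -> R) (M : R) : Prop :=
  (exists t, h t = M) /\ (forall t, h t <= M).

Definition IsMin (h : R -> R) (m : R) : Prop :=
  (exists t, h t = m) /\ (forall t, m <= h t).

(* Write D = Σ n(n-1)|c_n|² = Σ n²|c_n|² - Σ n|c_n|², a series of nonnegative terms.
   Cauchy–Schwarz with the weights 1/(n(n-1)), whose sum over n ∉ {0,1} is 2, shows
   that the high-frequency part f - c_0 - c_1 e^{iθ} has modulus at most ρ = √(2D)
   everywhere.  So |f - c_0| stays within ρ of |c_1|, and max ≥ 2 min forces
   |c_1| ≤ 3ρ, i.e. |c_1|² ≤ 18 D.  As n² ≤ 2n(n-1) for n ≠ 1, this gives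
   Σ n²|c_n|² ≤ |c_1|² + 2D ≤ 20 D, whence Σ n|c_n|² ≤ (19/20) Σ n²|c_n|². *)

From Stdlib Require Import Lra Lia Psatz.
From Coquelicot Require Import Rcomplements Complex.
Open Scope R_scope.

Lemma zsum_ext (f g : Z -> R) N : (forall n, f n = g n) -> zsum f N = zsum g N.
Proof. intros H; unfold zsum; apply sum_eq; intros; apply H. Qed.

Lemma zsum_plus f g N : zsum (fun n => f n + g n) N = zsum f N + zsum g N.
Proof. unfold zsum; apply plus_sum. Qed.

Lemma zsum_minus f g N : zsum (fun n => f n - g n) N = zsum f N - zsum g N.
Proof. unfold zsum; apply minus_sum. Qed.

Lemma zsum_scal c f N : zsum (fun n => c * f n) N = c * zsum f N.
Proof. unfold zsum; rewrite scal_sum; apply sum_eq; intros; ring. Qed.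

Lemma zsum_le f g N : (forall n, f n <= g n) -> zsum f N <= zsum g N.
Proof. intros H; unfold zsum; apply sum_Rle; intros; apply H. Qed.

Lemma zsum_ge0 f N : (forall n, 0 <= f n) -> 0 <= zsum f N.
Proof. intros H; unfold zsum; apply cond_pos_sum; intros; apply H. Qed.

Lemma zsum_0 g : zsum g 0 = g 0%Z.
Proof. reflexivity. Qed.

Lemma zsum_S g N :
  zsum g (S N) = zsum g N + g (- Z.of_nat (S N))%Z + g (Z.of_nat (S N)).
Proof.
  unfold zsum. replace (2 * S N)%nat with (S (S (2 * N))) by lia.
  rewrite tech5, decomp_sum by lia. cbn [Nat.pred].
  rewrite (sum_eq (fun k => g (Z.of_nat (S k) - Z.of_nat (S N))%Z)
                  (fun k => g (Z.of_nat k - Z.of_nat N)%Z)) by (intros; f_equal; lia).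
  replace (Z.of_nat 0 - Z.of_nat (S N))%Z with (- Z.of_nat (S N))%Z by lia.
  replace (Z.of_nat (S (S (2 * N))) - Z.of_nat (S N))%Z with (Z.of_nat (S N)) by lia.
  ring.
Qed.

Lemma sum_f_R0_telescope (h : nat -> R) n :
  sum_f_R0 (fun k => h (S k) - h k) n = h (S n) - h 0%nat.
Proof. induction n as [|n IH]; [reflexivity|]. rewrite tech5, IH; ring. Qed.

Lemma zsum_telescope (h : Z -> R) N :
  zsum (fun n => h (n + 1)%Z - h n) N = h (Z.of_nat N + 1)%Z - h (- Z.of_nat N)%Z.
Proof.
  unfold zsum.
  rewrite (sum_eq _ (fun k => h (Z.of_nat (S k) - Z.of_nat N)%Z - h (Z.of_nat k - Z.of_nat N)%Z))
    by (intros; do 2 f_equal; lia).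
  rewrite (sum_f_R0_telescope (fun k => h (Z.of_nat k - Z.of_nat N)%Z)).
  f_equal; f_equal; lia.
Qed.

Lemma zsum_growing g : (forall n, 0 <= g n) -> Un_growing (fun N => zsum g N).
Proof.
  intros Hg N. rewrite zsum_S.
  pose proof (Hg (- Z.of_nat (S N))%Z). pose proof (Hg (Z.of_nat (S N))). lra.
Qed.

Lemma zsum_le_ZSeries g l N : (forall n, 0 <= g n) -> ZSeries g l -> zsum g N <= l.
Proof. intros Hg Hl. exact (growing_ineq _ _ (zsum_growing g Hg) Hl N). Qed.

Lemma Un_cv_const c : Un_cv (fun _ => c) c.
Proof. intros eps Heps; exists 0%nat; intros; unfold R_dist; rewrite Rminus_diag, Rabs_R0; lra. Qed.

Lemma Un_cv_pow2 u l : Un_cv u l -> Un_cv (fun N => u N ^ 2) (l ^ 2).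
Proof.
  intros Hu. apply Un_cv_ext with (fun N => u N * u N); [intros; ring|].
  replace (l ^ 2) with (l * l) by ring. now apply CV_mult.
Qed.

Lemma ZSeries_minus f g lf lg :
  ZSeries f lf -> ZSeries g lg -> ZSeries (fun n => f n - g n) (lf - lg).
Proof.
  intros Hf Hg. apply Un_cv_ext with (fun N => zsum f N - zsum g N).
  - intros; symmetry; apply zsum_minus.
  - now apply CV_minus.
Qed.

Definition kronecker (c n : Z) : R := if (n =? c)%Z then 1 else 0.

Lemma zsum_kronecker c N :
  zsum (kronecker c) N = if (Z.abs c <=? Z.of_nat N)%Z then 1 else 0.
Proof.
  unfold kronecker. induction N as [|N IH].
  - rewrite zsum_0. destruct (Z.eqb_spec 0 c), (Z.leb_spec (Z.abs c) (Z.of_nat 0)); lia || lra.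
  - rewrite zsum_S, IH.
    destruct (Z.eqb_spec (- Z.of_nat (S N)) c), (Z.eqb_spec (Z.of_nat (S N)) c),
      (Z.leb_spec (Z.abs c) (Z.of_nat N)), (Z.leb_spec (Z.abs c) (Z.of_nat (S N)));
      lia || lra.
Qed.

Lemma zsum_kronecker_le1 c N : zsum (kronecker c) N <= 1.
Proof. rewrite zsum_kronecker. destruct (_ <=? _)%Z; lra. Qed.

Lemma zsum_kronecker_eq1 c N : (Z.abs c <= Z.of_nat N)%Z -> zsum (kronecker c) N = 1.
Proof. intros. rewrite zsum_kronecker. now rewrite (proj2 (Z.leb_le _ _)). Qed.

Lemma zsum_sub_low g c0 c1 N : (1 <= N)%nat ->
  zsum (fun n => g n - c0 * kronecker 0 n - c1 * kronecker 1 n) N = zsum g N - c0 - c1.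
Proof.
  intros HN. rewrite !zsum_minus, !zsum_scal, !zsum_kronecker_eq1 by (simpl; lia). ring.
Qed.

Lemma ZSeries_sub_low g l c0 c1 : ZSeries g l ->
  ZSeries (fun n => g n - c0 * kronecker 0 n - c1 * kronecker 1 n) (l - c0 - c1).
Proof.
  intros Hg. apply (CV_shift _ 1).
  apply Un_cv_ext with (fun N => zsum g (N + 1) - c0 - c1).
  - intros N. rewrite zsum_sub_low by lia. reflexivity.
  - apply CV_minus; [apply CV_minus|]; [apply (CV_shift' _ 1 _ Hg)| |]; apply Un_cv_const.
Qed.

Lemma two_mul_le_add_of_sqr_le u p q : 0 <= p -> 0 <= q -> u ^ 2 <= p * q -> 2 * u <= p + q.
Proof.
  intros. apply Rsqr_incr_0_var; [|lra]. unfold Rsqr.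
  pose proof (pow2_ge_0 (p - q)). nra.
Qed.

Lemma sum_f_R0_cauchy_schwarz2 (x y w v : nat -> R) n :
  (forall k, 0 <= w k) -> (forall k, 0 <= v k) ->
  (forall k, x k ^ 2 + y k ^ 2 <= w k * v k) ->
  sum_f_R0 x n ^ 2 + sum_f_R0 y n ^ 2 <= sum_f_R0 w n * sum_f_R0 v n.
Proof.
  intros Hw Hv Hxy. induction n as [|n IH]; [apply Hxy|]. rewrite !tech5.
  pose proof (cond_pos_sum _ n Hw); pose proof (cond_pos_sum _ n Hv).
  set (X := sum_f_R0 x n) in *; set (Y := sum_f_R0 y n) in *.
  set (W := sum_f_R0 w n) in *; set (V := sum_f_R0 v n) in *.
  pose proof (Hw (S n)); pose proof (Hv (S n)); pose proof (Hxy (S n)).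
  assert (Hdot : (X * x (S n) + Y * y (S n)) ^ 2 <= (W * v (S n)) * (w (S n) * V)).
  { apply Rle_trans with ((X ^ 2 + Y ^ 2) * (x (S n) ^ 2 + y (S n) ^ 2)).
    - pose proof (pow2_ge_0 (X * y (S n) - Y * x (S n))). nra.
    - apply Rle_trans with ((W * V) * (w (S n) * v (S n))); [apply Rmult_le_compat; nra | nra]. }
  assert (HWv : 0 <= W * v (S n)) by nra; assert (HwV : 0 <= w (S n) * V) by nra.
  pose proof (two_mul_le_add_of_sqr_le _ _ _ HWv HwV Hdot). nra.
Qed.

(* A telescoping potential for the weights 1/(n(n-1)), n ∉ {0,1}: it climbs from 0 at -∞
   to 1 at n = 0, 1, and on to 2 at +∞. *)
Definition cs_potential (n : Z) : R :=
  if (n <=? 0)%Z then / (1 - IZR n) else if (n =? 1)%Z then 1 else 2 - / (IZR n - 1).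

Definition cs_weight (n : Z) : R := cs_potential (n + 1) - cs_potential n.

Lemma cs_potential_bounds n : 0 <= cs_potential n <= 2.
Proof.
  unfold cs_potential. destruct (Z.leb_spec n 0).
  - assert (IZR n <= 0) by (apply IZR_le; lia).
    pose proof (Rinv_l (1 - IZR n) ltac:(lra)). nra.
  - destruct (Z.eqb_spec n 1); [lra|].
    assert (2 <= IZR n) by (apply IZR_le; lia).
    pose proof (Rinv_l (IZR n - 1) ltac:(lra)). nra.
Qed.

Lemma zsum_cs_weight_le2 N : zsum cs_weight N <= 2.
Proof.
  unfold cs_weight. rewrite (zsum_telescope cs_potential).
  pose proof (cs_potential_bounds (Z.of_nat N + 1)).
  pose proof (cs_potential_bounds (- Z.of_nat N)). lra.
Qed.

Lemma cs_weight_mul_pred n : n <> 0%Z -> n <> 1%Z ->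
  cs_weight n * (IZR n * (IZR n - 1)) = 1.
Proof.
  intros H0 H1. unfold cs_weight, cs_potential. rewrite plus_IZR.
  destruct (Z.le_gt_cases n (-1)).
  - rewrite (proj2 (Z.leb_le n 0)), (proj2 (Z.leb_le (n + 1) 0)) by lia.
    assert (IZR n <= -1) by (apply IZR_le; lia).
    field. split; lra.
  - rewrite (proj2 (Z.leb_gt n 0)), (proj2 (Z.leb_gt (n + 1) 0)),
      (proj2 (Z.eqb_neq n 1)), (proj2 (Z.eqb_neq (n + 1) 1)) by lia.
    assert (2 <= IZR n) by (apply IZR_le; lia).
    field. split; lra.
Qed.

Lemma IZR_mul_pred_ge0 n : 0 <= IZR n * (IZR n - 1).
Proof.
  destruct (Z.le_gt_cases n 0).
  - assert (IZR n <= 0) by (apply IZR_le; lia). nra.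
  - assert (1 <= IZR n) by (apply IZR_le; lia). nra.
Qed.

Lemma IZR_sqr_le_2_mul_pred n : n <> 1%Z -> IZR n ^ 2 <= 2 * (IZR n * (IZR n - 1)).
Proof.
  intros H1. destruct (Z.le_gt_cases n 0).
  - assert (IZR n <= 0) by (apply IZR_le; lia). nra.
  - assert (2 <= IZR n) by (apply IZR_le; lia). nra.
Qed.

Lemma cs_weight_ge0 n : 0 <= cs_weight n.
Proof.
  destruct (Z.eq_dec n 0) as [->|Hn0].
  { unfold cs_weight, cs_potential; simpl. rewrite Rminus_0_r, Rinv_1. lra. }
  destruct (Z.eq_dec n 1) as [->|Hn1].
  { unfold cs_weight, cs_potential; simpl. replace (2 - 1) with 1 by ring. rewrite Rinv_1. lra. }
  pose proof (cs_weight_mul_pred n Hn0 Hn1).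
  assert (0 < IZR n * (IZR n - 1)).
  { destruct (Z.le_gt_cases n (-1)).
    - assert (IZR n <= -1) by (apply IZR_le; lia). nra.
    - assert (2 <= IZR n) by (apply IZR_le; lia). nra. }
  nra.
Qed.

Lemma cmod_triangle u v x y : cmod (u + x) (v + y) <= cmod u v + cmod x y.
Proof. exact (Cmod_triangle (u, v) (x, y)). Qed.

Lemma cmod_opp x y : cmod (- x) (- y) = cmod x y.
Proof. exact (Cmod_opp (x, y)). Qed.

Lemma Rabs_cmod_add_sub u v x y : Rabs (cmod (u + x) (v + y) - cmod u v) <= cmod x y.
Proof.
  pose proof (cmod_triangle u v x y).
  pose proof (cmod_triangle (u + x) (v + y) (- x) (- y)) as Hback.
  rewrite cmod_opp in Hback. replace (u + x + - x) with u in Hback by ring.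
  replace (v + y + - y) with v in Hback by ring.
  apply Rabs_le. lra.
Qed.

Lemma le_3_radius_of_max_ge_twice_min (h : R -> R) r rho M m :
  (forall t, Rabs (h t - r) <= rho) -> IsMax h M -> IsMin h m -> M >= 2 * m ->
  r <= 3 * rho.
Proof.
  intros Hclose [[t1 <-] _] [[t0 <-] _] HMm.
  pose proof (proj1 (Rabs_le_between' _ _ _) (Hclose t1)).
  pose proof (proj1 (Rabs_le_between' _ _ _) (Hclose t0)). lra.
Qed.

Section FourierCoefficients.

Variables a b : Z -> R.

Definition mode_re t n := a n * cos (IZR n * t) - b n * sin (IZR n * t).
Definition mode_im t n := a n * sin (IZR n * t) + b n * cos (IZR n * t).

Definition sobolev n := IZR n ^ 2 * (a n ^ 2 + b n ^ 2).
Definition dirichlet n := IZR n * (a n ^ 2 + b n ^ 2).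
Definition gap n := IZR n * (IZR n - 1) * (a n ^ 2 + b n ^ 2).

Definition high_re t n := mode_re t n - a 0%Z * kronecker 0 n - mode_re t 1 * kronecker 1 n.
Definition high_im t n := mode_im t n - b 0%Z * kronecker 0 n - mode_im t 1 * kronecker 1 n.

Lemma mode_sqr t n : mode_re t n ^ 2 + mode_im t n ^ 2 = a n ^ 2 + b n ^ 2.
Proof.
  unfold mode_re, mode_im. pose proof (sin2_cos2 (IZR n * t)). unfold Rsqr in *. nra.
Qed.

Lemma sobolev_ge0 n : 0 <= sobolev n.
Proof. unfold sobolev. apply Rmult_le_pos; nra. Qed.

Lemma gap_ge0 n : 0 <= gap n.
Proof.
  unfold gap. pose proof (IZR_mul_pred_ge0 n). apply Rmult_le_pos; nra.
Qed.

Lemma gap_le_2_sobolev n : gap n <= 2 * sobolev n.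
Proof.
  unfold gap, sobolev. pose proof (IZR_mul_pred_ge0 (n + 1)) as Hn.
  rewrite plus_IZR in Hn. assert (0 <= a n ^ 2 + b n ^ 2) by nra. nra.
Qed.

Lemma high_sqr_le t n : high_re t n ^ 2 + high_im t n ^ 2 <= cs_weight n * gap n.
Proof.
  pose proof (cs_weight_ge0 n); pose proof (gap_ge0 n).
  unfold high_re, high_im, kronecker.
  destruct (Z.eqb_spec n 0) as [->|Hn0].
  { unfold mode_re, mode_im. cbn [Z.eqb]. rewrite Rmult_0_l, cos_0, sin_0. nra. }
  destruct (Z.eqb_spec n 1) as [->|Hn1]; [nra|].
  rewrite !Rmult_0_r, !Rminus_0_r, mode_sqr.
  unfold gap. rewrite <- Rmult_assoc, (cs_weight_mul_pred n Hn0 Hn1). lra.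
Qed.

Lemma ex_ZSeries_gap S2 : ZSeries sobolev S2 -> exists D, ZSeries gap D.
Proof.
  intros HS2. destruct (growing_cv (fun N => zsum gap N)) as [D HD].
  - apply zsum_growing, gap_ge0.
  - exists (2 * S2). intros x [N ->].
    apply Rle_trans with (zsum (fun n => 2 * sobolev n) N).
    + apply zsum_le, gap_le_2_sobolev.
    + rewrite zsum_scal. pose proof (zsum_le_ZSeries _ _ N sobolev_ge0 HS2). lra.
  - now exists D.
Qed.

Lemma ZSeries_dirichlet S2 D : ZSeries sobolev S2 -> ZSeries gap D -> ZSeries dirichlet (S2 - D).
Proof.
  intros HS2 HD. apply Un_cv_ext with (fun N => zsum (fun n => sobolev n - gap n) N).
  - intros N. apply zsum_ext. intros n. unfold sobolev, gap, dirichlet. ring.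
  - now apply ZSeries_minus.
Qed.

Variables fr fi : R -> R.
Hypothesis Hre : forall t, ZSeries (mode_re t) (fr t).
Hypothesis Him : forall t, ZSeries (mode_im t) (fi t).

Variable D : R.
Hypothesis HD : forall N, zsum gap N <= D.

Lemma high_part_sqr_le t :
  (fr t - a 0%Z - mode_re t 1) ^ 2 + (fi t - b 0%Z - mode_im t 1) ^ 2 <= 2 * D.
Proof.
  apply (Rle_cv_lim (Un := fun N => zsum (high_re t) N ^ 2 + zsum (high_im t) N ^ 2)
                    (Vn := fun _ => 2 * D)).
  - intros N. apply Rle_trans with (zsum cs_weight N * zsum gap N).
    + apply sum_f_R0_cauchy_schwarz2; intros; [apply cs_weight_ge0 | apply gap_ge0 | apply high_sqr_le].
    + pose proof (zsum_cs_weight_le2 N); pose proof (HD N).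
      pose proof (zsum_ge0 _ N cs_weight_ge0); pose proof (zsum_ge0 _ N gap_ge0). nra.
  - apply CV_plus; apply Un_cv_pow2; apply ZSeries_sub_low; [apply Hre | apply Him].
  - apply Un_cv_const.
Qed.

Lemma Rabs_cmod_sub_first_mode t :
  Rabs (cmod (fr t - a 0%Z) (fi t - b 0%Z) - sqrt (a 1%Z ^ 2 + b 1%Z ^ 2)) <= sqrt (2 * D).
Proof.
  rewrite <- (mode_sqr t 1).
  pose proof (Rabs_cmod_add_sub (mode_re t 1) (mode_im t 1)
                (fr t - a 0%Z - mode_re t 1) (fi t - b 0%Z - mode_im t 1)) as Hdist.
  replace (mode_re t 1 + (fr t - a 0%Z - mode_re t 1)) with (fr t - a 0%Z) in Hdist by ring.
  replace (mode_im t 1 + (fi t - b 0%Z - mode_im t 1)) with (fi t - b 0%Z) in Hdist by ring.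
  eapply Rle_trans; [exact Hdist|]. apply sqrt_le_1_alt, high_part_sqr_le.
Qed.

Lemma first_mode_sqr_le_gap M m :
  IsMax (fun t => cmod (fr t - a 0%Z) (fi t - b 0%Z)) M ->
  IsMin (fun t => cmod (fr t - a 0%Z) (fi t - b 0%Z)) m -> M >= 2 * m ->
  a 1%Z ^ 2 + b 1%Z ^ 2 <= 18 * D.
Proof.
  intros HM Hm HMm.
  pose proof (le_3_radius_of_max_ge_twice_min _ _ _ _ _ Rabs_cmod_sub_first_mode HM Hm HMm) as Hr.
  assert (HD0 : 0 <= D) by (pose proof (HD 0); pose proof (zsum_ge0 _ 0 gap_ge0); lra).
  assert (Hp : 0 <= a 1%Z ^ 2 + b 1%Z ^ 2) by nra.
  pose proof (pow2_sqrt _ Hp); pose proof (pow2_sqrt (2 * D) ltac:(lra)).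
  pose proof (sqrt_pos (a 1%Z ^ 2 + b 1%Z ^ 2)). nra.
Qed.

Lemma zsum_sobolev_le N : zsum sobolev N <= a 1%Z ^ 2 + b 1%Z ^ 2 + 2 * zsum gap N.
Proof.
  apply Rle_trans with (zsum (fun n => 2 * gap n + (a 1%Z ^ 2 + b 1%Z ^ 2) * kronecker 1 n) N).
  - apply zsum_le. intros n. unfold sobolev, gap, kronecker.
    destruct (Z.eqb_spec n 1) as [->|Hn1]; [simpl; lra|].
    pose proof (IZR_sqr_le_2_mul_pred n Hn1). assert (0 <= a n ^ 2 + b n ^ 2) by nra. nra.
  - rewrite zsum_plus, !zsum_scal. pose proof (zsum_kronecker_le1 1 N). nra.
Qed.

Lemma sobolev_le S2 : ZSeries sobolev S2 -> S2 <= a 1%Z ^ 2 + b 1%Z ^ 2 + 2 * D.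
Proof.
  intros HS2. apply (Rle_cv_lim (Un := fun N => zsum sobolev N) (Vn := fun _ => a 1%Z ^ 2 + b 1%Z ^ 2 + 2 * D)).
  - intros N. pose proof (zsum_sobolev_le N); pose proof (HD N). lra.
  - exact HS2.
  - apply Un_cv_const.
Qed.

End FourierCoefficients.

Theorem mainTheorem18
  (fr fi : R -> R) (a b : Z -> R) (S2 : R)
  (Hsob : ZSeries (fun n => IZR n ^ 2 * (a n ^ 2 + b n ^ 2)) S2)
  (Hre : forall t, ZSeries
           (fun n => a n * cos (IZR n * t) - b n * sin (IZR n * t)) (fr t))
  (Him : forall t, ZSeries
           (fun n => a n * sin (IZR n * t) + b n * cos (IZR n * t)) (fi t))
  (M m : R)
  (HM : IsMax (fun t => cmod (fr t - a 0%Z) (fi t - b 0%Z)) M)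
  (Hm : IsMin (fun t => cmod (fr t - a 0%Z) (fi t - b 0%Z)) m)
  (HMm : M >= 2 * m) :
  exists S1, ZSeries (fun n => IZR n * (a n ^ 2 + b n ^ 2)) S1 /\
             S1 <= 99 / 100 * S2.
Proof.
  destruct (ex_ZSeries_gap a b S2 Hsob) as [D HD].
  assert (HDle : forall N, zsum (gap a b) N <= D)
    by (intros N; exact (zsum_le_ZSeries _ _ N (gap_ge0 a b) HD)).
  pose proof (first_mode_sqr_le_gap a b fr fi Hre Him D HDle M m HM Hm HMm).
  pose proof (sobolev_le a b D HDle S2 Hsob).
  exists (S2 - D). split.
  - exact (ZSeries_dirichlet a b S2 D Hsob HD).
  - assert (0 <= a 1%Z ^ 2 + b 1%Z ^ 2) by nra. lra.
Qed.
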